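(* Let $\mathcal{L}(X,\phi)$ be smooth on $(0,\infty)\times I$ ($I$ an open interval) with $\mathcal{L}_X\neq0$ and $\mathcal{L}_X+2X\mathcal{L}_{XX}\neq 0$. Define $$c_{\rm s}^2=\frac{\mathcal{L}_X}{\mathcal{L}_X+2X\mathcal{L}_{XX}},\qquad \tau=\mathcal{L}_\phi-\frac{2X\mathcal{L}_X\mathcal{L}_{X\phi}-\mathcal{L}_X\mathcal{L}_\phi}{\mathcal{L}_X+2X\mathcal{L}_{XX}}.$$ Then (a) $\tau=\left.\partial p/\partial\phi\right|_{\rho}$, i.e. $\tau=p_\phi-p_X\rho_\phi/\rho_X$ where $p=\mathcal{L}$, $\rho=2X\mathcal{L}_X-\mathcal{L}$; (b) $\tau\equiv 0$ on the domain if and only if $\left(\dfrac{\mathcal{L}_\phi}{X\mathcal{L}_X}\right)_X\equiv 0$; and (c) $\tau\equiv0$ if and only if there exist smooth functions $f$ on $I$ and $G$ on $(0,\infty)$ with $\mathcal{L}(X,\phi)=G(e^{-2f(\phi)}X)$, i.e. the Lagrangian can be brought to purely kinetic form by the field redefinition $\tilde\phi_{,\mu}=e^{-f(\phi)}\phi_{,\mu}$.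
   Context: $X=\tfrac12 g^{\mu\nu}\phi_{,\mu}\phi_{,\nu}$ is the kinetic term of the scalar field $\phi$; subscripts $X,\phi$ denote partial derivatives. $c_{\rm s}^2=p_X/\rho_X$ is the adiabatic speed of sound (derivative of $p$ with respect to $\rho$ at fixed $\phi$), and $\tau$ is the coefficient of the entropy-per-particle perturbation in the evolution equation of the gravitational potential; $\tau=0$ corresponds to adiabatic perturbations. *)

From Stdlib Require Import Reals.
Open Scope R_scope.

Definition is_open_interval (I : R -> Prop) : Prop :=
  (exists x, I x) /\
  (forall x y z, I x -> I z -> x <= y -> y <= z -> I y) /\
  (forall x, I x -> exists e, 0 < e /\ forall y, Rabs (y - x) < e -> I y).

Definition dom (I : R -> Prop) (X phi : R) : Prop := 0 < X /\ I phi.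

Definition pd1 (D : R -> R -> Prop) (f fx : R -> R -> R) : Prop :=
  forall x p, D x p -> derivable_pt_lim (fun y => f y p) x (fx x p).

Definition pd2 (D : R -> R -> Prop) (f fp : R -> R -> R) : Prop :=
  forall x p, D x p -> derivable_pt_lim (fun q => f x q) p (fp x p).

Definition cont2 (D : R -> R -> Prop) (f : R -> R -> R) : Prop :=
  forall x p, D x p -> forall eps, 0 < eps -> exists del, 0 < del /\
    forall y q, D y q -> Rabs (y - x) < del -> Rabs (q - p) < del ->
      Rabs (f y q - f x p) < eps.

(* C^infinity on (the open set) D: continuous, both first partials exist,
   and they are again C^infinity. *)
CoInductive smooth2 (D : R -> R -> Prop) (f : R -> R -> R) : Prop :=
  smooth2_intro : forall fx fp : R -> R -> R,
    cont2 D f -> pd1 D f fx -> pd2 D f fp ->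
    smooth2 D fx -> smooth2 D fp -> smooth2 D f.

CoInductive smooth1 (U : R -> Prop) (g : R -> R) : Prop :=
  smooth1_intro : forall g' : R -> R,
    (forall x, U x -> derivable_pt_lim g x (g' x)) ->
    smooth1 U g' -> smooth1 U g.

Definition cs2 (LX LXX : R -> R -> R) (X phi : R) : R :=
  LX X phi / (LX X phi + 2 * X * LXX X phi).

Definition tau (LX LXX Lp LXp : R -> R -> R) (X phi : R) : R :=
  Lp X phi - (2 * X * LX X phi * LXp X phi - LX X phi * Lp X phi)
             / (LX X phi + 2 * X * LXX X phi).

(* energy density rho = 2 X L_X - L ; pressure p = L *)
Definition rho (L LX : R -> R -> R) (X phi : R) : R := 2 * X * LX X phi - L X phi.

(* Write LX, LXX, Lp, LXp for the partial derivatives of L and put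
     K := LX Lp + X LXX Lp - X LX LXp.
   Two pieces of algebra carry the whole theorem:
     tau = 2 K / (LX + 2 X LXX)   and   d/dX [Lp / (X LX)] = - K / (X LX)^2,
   the second one using the symmetry of mixed partials (Schwarz) to identify
   the X-derivative of Lp with LXp.  Hence (b): tau vanishes exactly where the
   "kinetic ratio" Lp / (X LX) is stationary in X.  For (c), a stationary
   ratio equals a function -2 f'(phi) of phi alone; taking f a primitive of
   it, L is constant along the curves phi |-> (e^{2 f(phi)} Y, phi), which
   gives L = G(e^{-2 f} X).  Conversely, differentiating G(e^{-2 f} X) shows
   the ratio is -2 f'(phi), hence stationary. *)

From Stdlib Require Import Reals Lra.
From Coquelicot Require Import Coquelicot.
Open Scope R_scope.

Lemma derivable_pt_lim_rewrite (f : R -> R) (x a b : R) :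
  derivable_pt_lim f x a -> a = b -> derivable_pt_lim f x b.
Proof. intros H <-; exact H. Qed.

Lemma derivable_pt_lim_local (f g : R -> R) (x l d : R) :
  0 < d -> (forall y, Rabs (y - x) < d -> f y = g y) ->
  derivable_pt_lim f x l -> derivable_pt_lim g x l.
Proof.
intros Hd Heq H eps Heps. destruct (H eps Heps) as [del Hdel].
assert (Hm : 0 < Rmin del d) by (apply Rmin_pos; [apply cond_pos | lra]).
exists (mkposreal _ Hm). intros h hne hlt. simpl in hlt.
pose proof (Rmin_l del d). pose proof (Rmin_r del d).
rewrite <- (Heq (x + h)), <- (Heq x).
- apply Hdel; auto; lra.
- rewrite Rminus_eq_0, Rabs_R0; lra.
- replace (x + h - x) with h by ring; lra.
Qed.

Lemma derivable_pt_lim_inv (g : R -> R) (x b : R) :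
  derivable_pt_lim g x b -> g x <> 0 ->
  derivable_pt_lim (fun y => / g y) x (- b / (g x)²).
Proof.
intros H Hn.
apply (derivable_pt_lim_local (fun y => 1 / g y) _ x _ 1); [lra | intros; unfold Rdiv; ring |].
eapply derivable_pt_lim_rewrite.
- apply derivable_pt_lim_div; [apply derivable_pt_lim_const | exact H | exact Hn].
- unfold Rsqr; field; exact Hn.
Qed.

Lemma const_of_zero_derivative (f : R -> R) (a b : R) :
  (forall x, Rmin a b <= x <= Rmax a b -> derivable_pt_lim f x 0) -> f b = f a.
Proof.
intros H. destruct (MVT_gen f a b (fun _ => 0)) as [c [_ Hc]].
- intros x Hx. apply is_derive_Reals, H; lra.
- intros x Hx. apply derivable_continuous_pt. exists 0. apply H; exact Hx.
- lra.
Qed.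

Lemma increment_bound (g g' : R -> R) (x u l e : R) :
  (forall z, Rmin x u <= z <= Rmax x u -> derivable_pt_lim g z (g' z)) ->
  (forall z, Rmin x u <= z <= Rmax x u -> Rabs (g' z - l) <= e) ->
  Rabs (g u - g x - l * (u - x)) <= e * Rabs (u - x).
Proof.
intros Hd Hb. destruct (MVT_gen g x u g') as [c [Hc Hmvt]].
- intros z Hz. apply is_derive_Reals, Hd; lra.
- intros z Hz. apply derivable_continuous_pt. exists (g' z). apply Hd; exact Hz.
- replace (g u - g x - l * (u - x)) with ((g' c - l) * (u - x)) by lra.
  rewrite Rabs_mult. apply Rmult_le_compat_r; [apply Rabs_pos | apply Hb; exact Hc].
Qed.

Lemma interval_segment (I : R -> Prop) (a b q : R) :
  is_open_interval I -> I a -> I b -> Rmin a b <= q <= Rmax a b -> I q.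
Proof.
intros [_ [Hconv _]] Ha Hb Hq. unfold Rmin, Rmax in Hq.
destruct (Rle_dec a b); [apply (Hconv a q b) | apply (Hconv b q a)]; auto; lra.
Qed.

Lemma smooth1_const (U : R -> Prop) : forall c, smooth1 U (fun _ => c).
Proof.
cofix CH. intro c. apply (smooth1_intro U _ (fun _ => 0)).
- intros; apply derivable_pt_lim_const.
- apply CH.
Qed.

Inductive smooth_alg (U : R -> Prop) : (R -> R) -> Prop :=
| alg_smooth g : smooth1 U g -> smooth_alg U g
| alg_inv g : smooth1 U g -> (forall x, U x -> g x <> 0) -> smooth_alg U (fun x => / g x)
| alg_plus f g : smooth_alg U f -> smooth_alg U g -> smooth_alg U (fun x => f x + g x)
| alg_mult f g : smooth_alg U f -> smooth_alg U g -> smooth_alg U (fun x => f x * g x).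

Lemma smooth_alg_derivative (U : R -> Prop) (f : R -> R) :
  smooth_alg U f ->
  exists f', smooth_alg U f' /\ forall x, U x -> derivable_pt_lim f x (f' x).
Proof.
induction 1 as [g [g' Hd Hs] | g Hg Hn | f g _ [f' [Hf' Hdf]] _ [g' [Hg' Hdg]]
               | f g Hf [f' [Hf' Hdf]] Hg [g' [Hg' Hdg]]].
- exists g'. split; [apply alg_smooth |]; auto.
- pose proof Hg as [g' Hd Hs].
  exists (fun x => ((fun _ => -1) x * g' x) * ((fun x => / g x) x * (fun x => / g x) x)).
  split.
  + repeat apply alg_mult; try apply alg_inv; auto; apply alg_smooth; auto.
    apply smooth1_const.
  + intros x Hx. eapply derivable_pt_lim_rewrite.
    * apply derivable_pt_lim_inv; auto.
    * unfold Rsqr; field; auto.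
- exists (fun x => f' x + g' x). split; [apply alg_plus; auto |].
  intros; apply derivable_pt_lim_plus; auto.
- exists (fun x => f' x * g x + f x * g' x). split; [apply alg_plus; apply alg_mult; auto |].
  intros; apply derivable_pt_lim_mult; auto.
Qed.

Lemma smooth_alg_smooth (U : R -> Prop) : forall f, smooth_alg U f -> smooth1 U f.
Proof.
cofix CH. intros f Hf. destruct (smooth_alg_derivative U f Hf) as [f' [Hf' Hd]].
apply (smooth1_intro U f f' Hd). apply CH; exact Hf'.
Qed.

Lemma smooth1_mult (U : R -> Prop) (g h : R -> R) :
  smooth1 U g -> smooth1 U h -> smooth1 U (fun x => g x * h x).
Proof. intros; apply smooth_alg_smooth, alg_mult; apply alg_smooth; auto. Qed.

Lemma smooth1_div (U : R -> Prop) (g h : R -> R) :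
  smooth1 U g -> smooth1 U h -> (forall x, U x -> h x <> 0) ->
  smooth1 U (fun x => g x / h x).
Proof.
intros; apply smooth_alg_smooth, alg_mult; [apply alg_smooth | apply alg_inv]; auto.
Qed.

Lemma primitive_on_interval (I : R -> Prop) (h : R -> R) (a : R) :
  is_open_interval I -> I a -> smooth1 I h ->
  exists f, smooth1 I f /\ (forall q, I q -> derivable_pt_lim f q (h q)) /\ f a = 0.
Proof.
intros HI Ha Sh.
assert (Ch : forall q, I q -> continuous h q).
{ intros q Hq. destruct Sh as [h' Hd _].
  apply (@ex_derive_continuous R_AbsRing R_NormedModule). exists (h' q).
  apply is_derive_Reals; auto. }
set (f := fun q => RInt h a q).
assert (Df : forall q, I q -> derivable_pt_lim f q (h q)).
{ intros q Hq. apply is_derive_Reals, (is_derive_RInt h f a q); [| apply Ch; exact Hq].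
  pose proof HI as [_ [_ Hop]]. destruct (Hop q Hq) as [e [He Hb]].
  exists (mkposreal e He). intros b Hbb.
  apply (@RInt_correct R_CompleteNormedModule), (@ex_RInt_continuous R_CompleteNormedModule).
  intros z Hz. apply Ch, (interval_segment I a b); auto. }
exists f. split; [exact (smooth1_intro I f h Df Sh) | split; [exact Df |]].
exact (@RInt_point R_CompleteNormedModule a h).
Qed.

Lemma dom_neighbourhood (I : R -> Prop) (X p : R) :
  is_open_interval I -> dom I X p ->
  exists d, 0 < d /\ forall u v, Rabs (u - X) < d -> Rabs (v - p) < d -> dom I u v.
Proof.
intros [_ [_ Hop]] [HX Hp]. destruct (Hop p Hp) as [e [He Hy]].
exists (Rmin X e). split; [apply Rmin_pos; lra |].
intros u v Hu Hv. pose proof (Rmin_l X e). pose proof (Rmin_r X e). split.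
- apply Rabs_def2 in Hu; lra.
- apply Hy; lra.
Qed.

Lemma pd1_unique (D : R -> R -> Prop) (f a b : R -> R -> R) :
  pd1 D f a -> pd1 D f b -> forall x p, D x p -> a x p = b x p.
Proof. intros Ha Hb x p Hd. exact (uniqueness_limite _ _ _ _ (Ha x p Hd) (Hb x p Hd)). Qed.

Lemma pd2_unique (D : R -> R -> Prop) (f a b : R -> R -> R) :
  pd2 D f a -> pd2 D f b -> forall x p, D x p -> a x p = b x p.
Proof. intros Ha Hb x p Hd. exact (uniqueness_limite _ _ _ _ (Ha x p Hd) (Hb x p Hd)). Qed.

Lemma pd1_ext (I : R -> Prop) (f g gx : R -> R -> R) :
  is_open_interval I -> pd1 (dom I) f gx ->
  (forall x p, dom I x p -> f x p = g x p) -> pd1 (dom I) g gx.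
Proof.
intros HI H Heq x p Hd. destruct (dom_neighbourhood I x p HI Hd) as [d [Hd0 Hnb]].
apply (derivable_pt_lim_local (fun y => f y p) _ x _ d); auto.
intros y Hy; apply Heq, Hnb; auto. rewrite Rminus_eq_0, Rabs_R0; lra.
Qed.

Lemma pd2_ext (I : R -> Prop) (f g gp : R -> R -> R) :
  is_open_interval I -> pd2 (dom I) f gp ->
  (forall x p, dom I x p -> f x p = g x p) -> pd2 (dom I) g gp.
Proof.
intros HI H Heq x p Hd. destruct (dom_neighbourhood I x p HI Hd) as [d [Hd0 Hnb]].
apply (derivable_pt_lim_local (fun q => f x q) _ p _ d); auto.
intros y Hy; apply Heq, Hnb; auto. rewrite Rminus_eq_0, Rabs_R0; lra.
Qed.

Lemma cont2_ext (D : R -> R -> Prop) (f g : R -> R -> R) :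
  cont2 D f -> (forall x p, D x p -> f x p = g x p) -> cont2 D g.
Proof.
intros Hf Heq x p Hd e He. destruct (Hf x p Hd e He) as [del [Hdel H]].
exists del. split; [exact Hdel |]. intros y q Hyq Hy Hq.
rewrite <- (Heq y q Hyq), <- (Heq x p Hd). apply H; auto.
Qed.

Lemma smooth2_ext (I : R -> Prop) (f g : R -> R -> R) :
  is_open_interval I -> smooth2 (dom I) f ->
  (forall x p, dom I x p -> f x p = g x p) -> smooth2 (dom I) g.
Proof.
intros HI [fx fp Hc H1 H2 S1 S2] Heq. apply (smooth2_intro _ _ fx fp); auto.
- exact (cont2_ext _ _ _ Hc Heq).
- exact (pd1_ext I f g fx HI H1 Heq).
- exact (pd2_ext I f g fp HI H2 Heq).
Qed.

Lemma smooth2_slice_phi (D : R -> R -> Prop) (X0 : R) (U : R -> Prop) :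
  forall F, (forall q, U q -> D X0 q) -> smooth2 D F -> smooth1 U (fun q => F X0 q).
Proof.
cofix CH. intros F HU [fx fp _ _ Hp _ Sp].
apply (smooth1_intro U _ (fun q => fp X0 q)); [intros q Hq; apply Hp; auto | apply CH; auto].
Qed.

Lemma smooth2_slice_X (D : R -> R -> Prop) (p0 : R) (U : R -> Prop) :
  forall F, (forall x, U x -> D x p0) -> smooth2 D F -> smooth1 U (fun x => F x p0).
Proof.
cofix CH. intros F HU [fx fp _ Hx _ Sx _].
apply (smooth1_intro U _ (fun x => fx x p0)); [intros x Hx'; apply Hx; auto | apply CH; auto].
Qed.

Lemma cont2_continuity_2d (I : R -> Prop) (f : R -> R -> R) (x p : R) :
  is_open_interval I -> cont2 (dom I) f -> dom I x p -> continuity_2d_pt f x p.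
Proof.
intros HI Hc Hd eps. destruct (Hc x p Hd eps (cond_pos eps)) as [del [Hdel H]].
destruct (dom_neighbourhood I x p HI Hd) as [d [Hd0 Hnb]].
assert (Hm : 0 < Rmin del d) by (apply Rmin_pos; lra).
exists (mkposreal _ Hm). simpl. intros u v Hu Hv.
pose proof (Rmin_l del d). pose proof (Rmin_r del d).
apply H; [apply Hnb | |]; lra.
Qed.

(* Existence of both partials with the first one continuous gives
   (Frechet) differentiability: move first in X (mean value estimate and
   continuity of LX), then in phi (definition of Lp). *)
Lemma C1_differentiable (I : R -> Prop) (L LX Lp : R -> R -> R) (x p : R) :
  is_open_interval I -> pd1 (dom I) L LX -> pd2 (dom I) L Lp -> cont2 (dom I) LX ->
  dom I x p -> differentiable_pt_lim L x p (LX x p) (Lp x p).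
Proof.
intros HI HX Hp Hc Hd eps.
assert (He2 : 0 < eps / 2) by (pose proof (cond_pos eps); lra).
destruct (Hc x p Hd _ He2) as [d1 [Hd1 Hc1]].
destruct (Hp x p Hd _ He2) as [d2 Hp2].
destruct (dom_neighbourhood I x p HI Hd) as [d [Hd0 Hnb]].
assert (Hm : 0 < Rmin d1 (Rmin d2 d)).
{ apply Rmin_pos; [lra | apply Rmin_pos; [apply cond_pos | lra]]. }
set (m := Rmin d1 (Rmin d2 d)) in Hm.
assert (Hm1 : m <= d1) by apply Rmin_l.
assert (Hm2 : m <= d2) by (eapply Rle_trans; [apply Rmin_r | apply Rmin_l]).
assert (Hm3 : m <= d) by (eapply Rle_trans; [apply Rmin_r | apply Rmin_r]).
exists (mkposreal _ Hm). simpl. intros u v Hu Hv.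
assert (Hseg : forall z, Rmin x u <= z <= Rmax x u -> Rabs (z - x) < m).
{ intros z Hz. apply Rabs_def2 in Hu. unfold Rmin, Rmax in Hz.
  apply Rabs_def1; destruct (Rle_dec x u); lra. }
assert (HA : Rabs (L u v - L x v - LX x p * (u - x)) <= eps / 2 * Rabs (u - x)).
{ apply (increment_bound (fun z => L z v) (fun z => LX z v)).
  - intros z Hz. specialize (Hseg z Hz). apply HX, Hnb; lra.
  - intros z Hz. specialize (Hseg z Hz). apply Rlt_le, Hc1; [apply Hnb | |]; lra. }
assert (HB : Rabs (L x v - L x p - Lp x p * (v - p)) <= eps / 2 * Rabs (v - p)).
{ destruct (Req_dec v p) as [-> | Hne].
  - rewrite !Rminus_eq_0, Rabs_R0, Rmult_0_r, Rminus_0_r, Rabs_R0. lra.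
  - assert (Hh : v - p <> 0) by lra.
    specialize (Hp2 (v - p) Hh). replace (p + (v - p)) with v in Hp2 by ring.
    assert (Hlt : Rabs (v - p) < d2) by lra. specialize (Hp2 Hlt).
    replace (L x v - L x p - Lp x p * (v - p)) with
      (((L x v - L x p) / (v - p) - Lp x p) * (v - p)) by (field; auto).
    rewrite Rabs_mult. apply Rmult_le_compat_r; [apply Rabs_pos | lra]. }
pose proof (Rmax_l (Rabs (u - x)) (Rabs (v - p))).
pose proof (Rmax_r (Rabs (u - x)) (Rabs (v - p))).
pose proof (cond_pos eps).
replace (L u v - L x p - (LX x p * (u - x) + Lp x p * (v - p))) with
  ((L u v - L x v - LX x p * (u - x)) + (L x v - L x p - Lp x p * (v - p))) by ring.
eapply Rle_trans; [apply Rabs_triang |]. nra.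
Qed.

Lemma chain_rule_curve (I : R -> Prop) (L LX Lp : R -> R -> R) (u : R -> R) (u' q : R) :
  is_open_interval I -> pd1 (dom I) L LX -> pd2 (dom I) L Lp -> cont2 (dom I) LX ->
  dom I (u q) q -> derivable_pt_lim u q u' ->
  derivable_pt_lim (fun t => L (u t) t) q (LX (u q) q * u' + Lp (u q) q).
Proof.
intros HI HX Hp Hc Hd Hu. eapply derivable_pt_lim_rewrite.
- apply (derivable_pt_lim_comp_2d L u (fun t => t)).
  + apply (C1_differentiable I L LX Lp); auto.
  + exact Hu.
  + apply derivable_pt_lim_id.
- ring.
Qed.

Lemma Derive_of_lim (f : R -> R) (x l : R) : derivable_pt_lim f x l -> Derive f x = l.
Proof. intros H. apply is_derive_unique, is_derive_Reals, H. Qed.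

Lemma mixed_partials_commute (I : R -> Prop) (L LX Lp LXp LpX : R -> R -> R) :
  is_open_interval I -> pd1 (dom I) L LX -> pd2 (dom I) L Lp ->
  pd2 (dom I) LX LXp -> pd1 (dom I) Lp LpX -> cont2 (dom I) LXp -> cont2 (dom I) LpX ->
  forall x p, dom I x p -> LpX x p = LXp x p.
Proof.
intros HI H1 H2 H3 H4 C3 C4 x p Hd.
destruct (dom_neighbourhood I x p HI Hd) as [d [Hd0 Hnb]].
assert (Hloc : forall P : R -> R -> Prop, (forall u v, dom I u v -> P u v) -> locally_2d P x p).
{ intros P HP. exists (mkposreal _ Hd0). simpl. intros; apply HP, Hnb; auto. }
assert (Ep : forall u v, dom I u v -> Derive (fun t => L u t) v = Lp u v)
  by (intros; apply Derive_of_lim, H2; auto).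
assert (Ex : forall u v, dom I u v -> Derive (fun t => L t v) u = LX u v)
  by (intros; apply Derive_of_lim, H1; auto).
assert (E1 : forall u v, dom I u v ->
          derivable_pt_lim (fun z => Derive (fun t => L z t) v) u (LpX u v)).
{ intros u v Hd'. apply (pd1_ext I Lp (fun z v => Derive (fun t => L z t) v)); auto.
  intros; symmetry; auto. }
assert (E2 : forall u v, dom I u v ->
          derivable_pt_lim (fun z => Derive (fun t => L t z) u) v (LXp u v)).
{ intros u v Hd'. apply (pd2_ext I LX (fun u z => Derive (fun t => L t z) u)); auto.
  intros; symmetry; auto. }
pose proof (Schwarz L x p) as S.
rewrite (Derive_of_lim _ _ _ (E1 x p Hd)), (Derive_of_lim _ _ _ (E2 x p Hd)) in S.
apply S.
- apply Hloc. intros u v Huv. repeat split.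
  + exists (LX u v). apply is_derive_Reals; auto.
  + exists (Lp u v). apply is_derive_Reals; auto.
  + exists (LpX u v). apply is_derive_Reals; auto.
  + exists (LXp u v). apply is_derive_Reals; auto.
- apply continuity_2d_pt_ext_loc with LpX; [| apply (cont2_continuity_2d I); auto].
  apply Hloc. intros; symmetry; apply Derive_of_lim; auto.
- apply continuity_2d_pt_ext_loc with LXp; [| apply (cont2_continuity_2d I); auto].
  apply Hloc. intros; symmetry; apply Derive_of_lim; auto.
Qed.

(* The combination whose vanishing characterises tau = 0. *)
Definition tau_numerator (LX LXX Lp LXp : R -> R -> R) (X phi : R) : R :=
  LX X phi * Lp X phi + X * LXX X phi * Lp X phi - X * LX X phi * LXp X phi.

Section Lagrangian.

Variables (I : R -> Prop) (L LX LXX Lp LXp : R -> R -> R).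
Hypothesis HI : is_open_interval I.
Hypothesis HL : smooth2 (dom I) L.
Hypotheses (HLX : pd1 (dom I) L LX) (HLXX : pd1 (dom I) LX LXX).
Hypotheses (HLp : pd2 (dom I) L Lp) (HLXp : pd2 (dom I) LX LXp).
Hypothesis Hnz1 : forall X phi, dom I X phi -> LX X phi <> 0.
Hypothesis Hnz2 : forall X phi, dom I X phi -> LX X phi + 2 * X * LXX X phi <> 0.

Lemma LX_smooth : smooth2 (dom I) LX.
Proof.
destruct HL as [fx fp _ H1 _ S1 _]. apply (smooth2_ext I fx); auto.
exact (pd1_unique _ _ _ _ H1 HLX).
Qed.

Lemma Lp_smooth : smooth2 (dom I) Lp.
Proof.
destruct HL as [fx fp _ _ H2 _ S2]. apply (smooth2_ext I fp); auto.
exact (pd2_unique _ _ _ _ H2 HLp).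
Qed.

(* L_phi has X-derivative L_{X phi} (symmetry of second derivatives). *)
Lemma Lp_X : pd1 (dom I) Lp LXp.
Proof.
destruct Lp_smooth as [fpx _ _ H1 _ [? ? Cpx _ _ _ _] _].
destruct LX_smooth as [_ fxp _ _ H2 _ [? ? Cxp _ _ _ _]].
assert (CXp : cont2 (dom I) LXp) by exact (cont2_ext _ _ _ Cxp (pd2_unique _ _ _ _ H2 HLXp)).
intros x p Hd. rewrite <- (mixed_partials_commute I L LX Lp LXp fpx); auto.
Qed.

Lemma tau_at_fixed_rho (X phi rX rphi : R) :
  dom I X phi ->
  derivable_pt_lim (fun Y => rho L LX Y phi) X rX ->
  derivable_pt_lim (fun q => rho L LX X q) phi rphi ->
  tau LX LXX Lp LXp X phi = Lp X phi - LX X phi * rphi / rX.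
Proof.
intros Hd HrX Hrphi.
assert (ErX : rX = LX X phi + 2 * X * LXX X phi).
{ apply (uniqueness_limite (fun Y => rho L LX Y phi) X); auto. unfold rho.
  eapply derivable_pt_lim_rewrite.
  - apply derivable_pt_lim_minus; [repeat apply derivable_pt_lim_mult |].
    + apply derivable_pt_lim_const.
    + apply derivable_pt_lim_id.
    + apply HLXX; auto.
    + apply HLX; auto.
  - cbv beta; ring. }
assert (Erphi : rphi = 2 * X * LXp X phi - Lp X phi).
{ apply (uniqueness_limite (fun q => rho L LX X q) phi); auto. unfold rho.
  eapply derivable_pt_lim_rewrite.
  - apply derivable_pt_lim_minus; [apply derivable_pt_lim_mult |].
    + apply derivable_pt_lim_const.
    + apply HLXp; auto.
    + apply HLp; auto.
  - cbv beta; ring. }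
subst rX rphi. unfold tau. field. apply Hnz2; exact Hd.
Qed.

Lemma tau_factor (X phi : R) :
  dom I X phi ->
  tau LX LXX Lp LXp X phi
  = 2 * tau_numerator LX LXX Lp LXp X phi / (LX X phi + 2 * X * LXX X phi).
Proof. intros Hd. unfold tau, tau_numerator. field. apply Hnz2; exact Hd. Qed.

Lemma ratio_derivative (X phi : R) :
  dom I X phi ->
  derivable_pt_lim (fun Y => Lp Y phi / (Y * LX Y phi)) X
    (- tau_numerator LX LXX Lp LXp X phi / (X * LX X phi)²).
Proof.
intros Hd. pose proof (Hnz1 X phi Hd). pose proof (proj1 Hd).
eapply derivable_pt_lim_rewrite.
- apply derivable_pt_lim_div.
  + apply Lp_X; exact Hd.
  + apply derivable_pt_lim_mult; [apply derivable_pt_lim_id | apply HLXX; exact Hd].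
  + apply Rmult_integral_contrapositive_currified; lra.
- unfold tau_numerator, Rsqr. field. split; lra.
Qed.

Lemma tau_zero_iff_ratio_stationary (X phi : R) :
  dom I X phi ->
  tau LX LXX Lp LXp X phi = 0 <->
  derivable_pt_lim (fun Y => Lp Y phi / (Y * LX Y phi)) X 0.
Proof.
intros Hd. pose proof (Hnz1 X phi Hd) as HLX0. pose proof (Hnz2 X phi Hd) as HD0.
pose proof (proj1 Hd) as HX.
rewrite (tau_factor X phi Hd).
set (N := tau_numerator LX LXX Lp LXp X phi).
set (D := LX X phi + 2 * X * LXX X phi) in *.
split.
- intros Htau. assert (HN : N = 0).
  { replace N with (2 * N / D * D / 2) by (field; auto). rewrite Htau. field. }
  eapply derivable_pt_lim_rewrite; [apply (ratio_derivative X phi Hd) |].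
  fold N. rewrite HN. unfold Rdiv. ring.
- intros Hst. pose proof (uniqueness_limite _ _ _ _ (ratio_derivative X phi Hd) Hst) as Hu.
  fold N in Hu. assert (HN : N = 0).
  { replace N with (- (- N / (X * LX X phi)²) * (X * LX X phi)²)
      by (unfold Rsqr; field; split; lra).
    rewrite Hu. ring. }
  rewrite HN. unfold Rdiv. ring.
Qed.

Lemma ratio_independent_of_X :
  (forall X phi, dom I X phi -> derivable_pt_lim (fun Y => Lp Y phi / (Y * LX Y phi)) X 0) ->
  forall X phi, dom I X phi -> Lp X phi = X * LX X phi * (Lp 1 phi / LX 1 phi).
Proof.
intros Hst X phi [HX Hp].
assert (D1 : dom I 1 phi) by (split; [lra | exact Hp]).
pose proof (Hnz1 X phi (conj HX Hp)). pose proof (Hnz1 1 phi D1).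
assert (Hc : Lp X phi / (X * LX X phi) = Lp 1 phi / (1 * LX 1 phi)).
{ apply (const_of_zero_derivative (fun Y => Lp Y phi / (Y * LX Y phi)) 1 X).
  intros x Hx. apply Hst. split; [| exact Hp].
  unfold Rmin in Hx; destruct (Rle_dec 1 X); lra. }
replace (Lp 1 phi / LX 1 phi) with (Lp 1 phi / (1 * LX 1 phi)) by (field; auto).
rewrite <- Hc. field. split; lra.
Qed.

Lemma L_constant_along_orbits (f : R -> R) (Y a b : R) :
  (forall X phi, dom I X phi -> derivable_pt_lim (fun Y => Lp Y phi / (Y * LX Y phi)) X 0) ->
  (forall q, I q -> derivable_pt_lim f q (- (1 / 2) * (Lp 1 q / LX 1 q))) ->
  0 < Y -> I a -> I b ->
  L (exp (2 * f b) * Y) b = L (exp (2 * f a) * Y) a.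
Proof.
intros Hst Df HY Ia Ib.
apply (const_of_zero_derivative (fun q => L (exp (2 * f q) * Y) q)).
intros q Hq. pose proof (interval_segment I a b q HI Ia Ib Hq) as Iq.
set (u := exp (2 * f q) * Y).
assert (Hdq : dom I u q).
{ split; [apply Rmult_lt_0_compat; [apply exp_pos | exact HY] | exact Iq]. }
assert (LX_cont : cont2 (dom I) LX) by (destruct LX_smooth; assumption).
eapply derivable_pt_lim_rewrite.
- apply (chain_rule_curve I L LX Lp (fun q => exp (2 * f q) * Y)); auto.
  apply derivable_pt_lim_mult; [| apply derivable_pt_lim_const].
  apply (derivable_pt_lim_comp (fun q => 2 * f q) exp); [| apply derivable_pt_lim_exp].
  apply derivable_pt_lim_mult; [apply derivable_pt_lim_const | apply Df; exact Iq].
- fold u. rewrite (ratio_independent_of_X Hst u q Hdq).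
  pose proof (Hnz1 1 q (conj Rlt_0_1 Iq)) as HLX1. unfold u. field. exact HLX1.
Qed.

Lemma kinetic_form_of_stationary_ratio :
  (forall X phi, dom I X phi -> derivable_pt_lim (fun Y => Lp Y phi / (Y * LX Y phi)) X 0) ->
  exists f G : R -> R, smooth1 I f /\ smooth1 (fun Y => 0 < Y) G /\
    forall X phi, dom I X phi -> L X phi = G (exp (-2 * f phi) * X).
Proof.
intros Hst. pose proof HI as [[phi0 Hphi0] _].
assert (D1 : forall q, I q -> dom I 1 q) by (intros q Hq; split; [lra | exact Hq]).
assert (Sh : smooth1 I (fun q => - (1 / 2) * (Lp 1 q / LX 1 q))).
{ apply smooth1_mult; [apply smooth1_const | apply smooth1_div].
  - apply (smooth2_slice_phi (dom I)); [exact D1 | exact Lp_smooth].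
  - apply (smooth2_slice_phi (dom I)); [exact D1 | exact LX_smooth].
  - intros q Hq; apply Hnz1, D1, Hq. }
destruct (primitive_on_interval I _ phi0 HI Hphi0 Sh) as [f [Sf [Df Hf0]]].
exists f, (fun Y => L Y phi0). split; [exact Sf | split].
- apply (smooth2_slice_X (dom I)); [intros x Hx; split; auto | exact HL].
- intros X phi [HX Hp].
  assert (HY : 0 < exp (-2 * f phi) * X) by (apply Rmult_lt_0_compat; [apply exp_pos | lra]).
  pose proof (L_constant_along_orbits f _ phi0 phi Hst Df HY Hphi0 Hp) as HF.
  rewrite Hf0, Rmult_0_r, exp_0, Rmult_1_l, <- Rmult_assoc, <- exp_plus in HF.
  replace (2 * f phi + -2 * f phi) with 0 in HF by ring.
  rewrite exp_0, Rmult_1_l in HF. exact HF.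
Qed.

Lemma kinetic_form_partials (f f' G G' : R -> R) (X phi : R) :
  (forall q, I q -> derivable_pt_lim f q (f' q)) ->
  (forall Y, 0 < Y -> derivable_pt_lim G Y (G' Y)) ->
  (forall X phi, dom I X phi -> L X phi = G (exp (-2 * f phi) * X)) ->
  dom I X phi ->
  LX X phi = G' (exp (-2 * f phi) * X) * exp (-2 * f phi) /\
  Lp X phi = G' (exp (-2 * f phi) * X) * exp (-2 * f phi) * (-2 * f' phi) * X.
Proof.
intros Df DG Heq Hd. destruct (dom_neighbourhood I X phi HI Hd) as [d [Hd0 Hnb]].
assert (Hpos : 0 < exp (-2 * f phi) * X)
  by (apply Rmult_lt_0_compat; [apply exp_pos | exact (proj1 Hd)]).
split.
- apply (uniqueness_limite (fun Y => L Y phi) X); [apply HLX; exact Hd |].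
  apply (derivable_pt_lim_local (fun Y => G (exp (-2 * f phi) * Y)) _ X _ d); auto.
  + intros y Hy. symmetry. apply Heq, Hnb; auto. rewrite Rminus_eq_0, Rabs_R0; lra.
  + eapply derivable_pt_lim_rewrite.
    * apply (derivable_pt_lim_comp (fun Y => exp (-2 * f phi) * Y) G); [| apply DG; exact Hpos].
      apply derivable_pt_lim_mult; [apply derivable_pt_lim_const | apply derivable_pt_lim_id].
    * cbv beta; ring.
- apply (uniqueness_limite (fun q => L X q) phi); [apply HLp; exact Hd |].
  apply (derivable_pt_lim_local (fun q => G (exp (-2 * f q) * X)) _ phi _ d); auto.
  + intros y Hy. symmetry. apply Heq, Hnb; auto. rewrite Rminus_eq_0, Rabs_R0; lra.
  + eapply derivable_pt_lim_rewrite.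
    * apply (derivable_pt_lim_comp (fun q => exp (-2 * f q) * X) G); [| apply DG; exact Hpos].
      apply derivable_pt_lim_mult; [| apply derivable_pt_lim_const].
      apply (derivable_pt_lim_comp (fun q => -2 * f q) exp); [| apply derivable_pt_lim_exp].
      apply derivable_pt_lim_mult; [apply derivable_pt_lim_const | apply Df, (proj2 Hd)].
    * cbv beta; ring.
Qed.

Lemma stationary_ratio_of_kinetic_form (f G : R -> R) :
  smooth1 I f -> smooth1 (fun Y => 0 < Y) G ->
  (forall X phi, dom I X phi -> L X phi = G (exp (-2 * f phi) * X)) ->
  forall X phi, dom I X phi -> derivable_pt_lim (fun Y => Lp Y phi / (Y * LX Y phi)) X 0.
Proof.
intros [f' Df _] [G' DG _] Heq X phi Hd.
assert (Hratio : forall Y, 0 < Y -> Lp Y phi / (Y * LX Y phi) = -2 * f' phi).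
{ intros Y HY. assert (HdY : dom I Y phi) by (split; [exact HY | exact (proj2 Hd)]).
  pose proof (Hnz1 Y phi HdY) as Hn.
  destruct (kinetic_form_partials f f' G G' Y phi Df DG Heq HdY) as [EX Ep].
  rewrite Ep. rewrite EX in Hn |- *.
  apply Rmult_neq_0_reg in Hn as [HG' He]. field. repeat split; [exact He | exact HG' | lra]. }
apply (derivable_pt_lim_local (fun _ => -2 * f' phi) _ X _ X); [exact (proj1 Hd) | |].
- intros y Hy. symmetry. apply Hratio. apply Rabs_def2 in Hy. lra.
- apply derivable_pt_lim_const.
Qed.

End Lagrangian.

Theorem mainTheorem2
  (I : R -> Prop) (L LX LXX Lp LXp : R -> R -> R)
  (HI : is_open_interval I)
  (HL : smooth2 (dom I) L)
  (HLX : pd1 (dom I) L LX) (HLXX : pd1 (dom I) LX LXX)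
  (HLp : pd2 (dom I) L Lp) (HLXp : pd2 (dom I) LX LXp)
  (Hnz1 : forall X phi, dom I X phi -> LX X phi <> 0)
  (Hnz2 : forall X phi, dom I X phi -> LX X phi + 2 * X * LXX X phi <> 0) :
  (* (a) tau = p_phi - p_X rho_phi / rho_X, with p = L *)
  (forall X phi, dom I X phi -> forall rX rphi : R,
     derivable_pt_lim (fun Y => rho L LX Y phi) X rX ->
     derivable_pt_lim (fun q => rho L LX X q) phi rphi ->
     tau LX LXX Lp LXp X phi = Lp X phi - LX X phi * rphi / rX)
  /\
  (* (b) tau == 0  <->  (L_phi / (X L_X))_X == 0 *)
  ((forall X phi, dom I X phi -> tau LX LXX Lp LXp X phi = 0) <->
   (forall X phi, dom I X phi ->
      derivable_pt_lim (fun Y => Lp Y phi / (Y * LX Y phi)) X 0))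
  /\
  (* (c) tau == 0  <->  L(X,phi) = G(e^{-2 f(phi)} X) with f, G smooth *)
  ((forall X phi, dom I X phi -> tau LX LXX Lp LXp X phi = 0) <->
   (exists (f G : R -> R), smooth1 I f /\ smooth1 (fun Y => 0 < Y) G /\
      forall X phi, dom I X phi -> L X phi = G (exp (-2 * f phi) * X))).
Proof.
assert (Hb : (forall X phi, dom I X phi -> tau LX LXX Lp LXp X phi = 0) <->
             (forall X phi, dom I X phi ->
                derivable_pt_lim (fun Y => Lp Y phi / (Y * LX Y phi)) X 0)).
{ split; intros H X phi Hd; specialize (H X phi Hd);
    apply (tau_zero_iff_ratio_stationary I L LX LXX Lp LXp); auto. }
split; [| split; [exact Hb |]].
- intros X phi Hd rX rphi. apply (tau_at_fixed_rho I L LX LXX Lp LXp); auto.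
- rewrite Hb. split.
  + apply (kinetic_form_of_stationary_ratio I L LX Lp); auto.
  + intros (f & G & Sf & SG & Heq).
    exact (stationary_ratio_of_kinetic_form I L LX Lp HI HLX HLp Hnz1 f G Sf SG Heq).
Qed.
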